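(* Let $N\ge1$, $m>1$, $\alpha,\beta\in\mathbb R$ with $N+\alpha-m>0$ and $\beta-\alpha+1>0$; let $s_0\ge0$, $\lambda>0$, $\wp>m-1$, and let $u$ be a positive solution of $$-(r^{N+\alpha-1}|u'(r)|^{m-2}u'(r))'=\lambda r^{N+\beta-1}u^{\wp}(r),\ r\in(s_0,\infty),\qquad u(s_0)=1,\quad u'(s_0)\le0.$$ Let $\varrho=\frac{N+\alpha-m}{m-1}$ and $U_\varrho(r)=ru'(r)+\varrho u(r)$. Then there are positive constants $C_1,C_2$ depending only on $N,\alpha,\beta,\lambda,\wp,m$ such that for all $r\in(s_0,\infty)$ $$r^{N+\beta}u^{\wp+1}(r)\le\begin{cases} C_1\, r^{-\frac{m(N+\beta)-(N+\alpha-m)(\wp+1)}{\wp-m+1}} & \text{if } N+\beta\ne\varrho\wp,\\ C_2\, r^{-\frac{(N+\alpha-m)(\wp+1)-(m-1)(N+\beta)}{m-1}} & \text{if } N+\beta=\varrho\wp.\end{cases}$$ Moreover, for all $r\in(s_0,\infty)$, $$\lambda\Big(\frac{N+\beta}{\wp+1}-\frac{N+\alpha-m}{m}\Big)\int_{s_0}^r s^{N+\beta-1}u^{\wp+1}(s)\,ds = -\frac{m-1}{m}r^{N+\alpha-1}|u'(r)|^{m-1}U_\varrho(r)+\frac{m-1}{m}s_0^{N+\alpha-1}|u'(s_0)|^{m-1}U_\varrho(s_0)+\frac{\lambda}{\wp+1}\big[r^{N+\beta}u^{\wp+1}(r)-s_0^{N+\beta}\big].$$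
   Context: A positive solution is a positive function $u\in C^1$ on $[s_0,\infty)$ satisfying the differential equation on $(s_0,\infty)$ (in the sense that $r^{N+\alpha-1}|u'|^{m-2}u'$ is $C^1$ there) together with the initial conditions. *)

(* R : realType, powR for real powers (0 `^ x = 0 for x <> 0). *)
From HB Require Import structures.
From mathcomp Require Import all_boot all_order all_algebra.
From mathcomp Require Import all_classical all_reals all_analysis.
Set Implicit Arguments. Unset Strict Implicit. Unset Printing Implicit Defensive.
Import Order.TTheory GRing.Theory Num.Theory.
Import numFieldNormedType.Exports.
Local Open Scope classical_set_scope.
Local Open Scope ring_scope.

Definition flux {R : realType} (N : nat) (al m : R) (du : R -> R) : R -> R :=
  fun r => r `^ (N%:R + al - 1) * (`|du r| `^ (m - 2) * du r).

Definition positive_solution {R : realType} (N : nat) (al be m lam p s0 : R)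
    (u du : R -> R) : Prop :=
  (forall x, s0 <= x -> 0 < u x) /\
  (forall x, s0 < x -> is_derive x 1 u (du x)) /\
  (h^-1 * (u (s0 + h) - u s0) @[h --> 0^'+] --> du s0) /\
  {within `[s0, +oo[, continuous du} /\
  (forall r, s0 < r ->
     is_derive r 1 (flux N al m du) (- (lam * r `^ (N%:R + be - 1) * u r `^ p))) /\
  {in `]s0, +oo[, continuous (derive1 (flux N al m du))} /\
  u s0 = 1 /\ du s0 <= 0.

(** Write a = N + alpha - 1, q = m - 1 and n = N + beta, so that 0 < q < a < n and
    q < p.  The flux F = r^a |u'|^(q-1) u' has derivative -lam r^(n-1) u^p < 0, and
    F(s0) <= 0, hence F < 0, u' < 0 and 0 < u <= 1 on (s0, oo).  Integrating F' from
    r/4 gives -u' >= c u^(p/q) r^((n-a)/q) on [r/2, r], and integrating this for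
    u^(-(p-q)/q) over [r/2, r] yields r^theta u(r) <= C with theta = (n-a+q)/(p-q)
    whenever r > 4 s0.  For s0 < r <= 4 s0 it suffices to bound s0 itself: u drops by
    at most 1 between 2 s0 and 4 s0, which bounds -F(2 s0) from above by a power of s0,
    while -F(2 s0) is bounded from below by another power of s0, directly if
    u(2 s0) >= 1/2 and through the energy (-F)^((q+1)/q) + C u^(p+1) otherwise.
    Raising r^theta u(r) <= C to the power p + 1 gives the decay estimate; when
    N + beta = rho p both exponents of the statement agree.

    The identity is the fundamental theorem of calculus for the Pohozaev function,
    whose derivative, computed from the flux form of the function, is the stated
    multiple of r^(n-1) u^(p+1).  Since this integrand may be singular at s0 = 0, the
    integral over [s0, r] is reached by monotone convergence. *)

From HB Require Import structures.
From mathcomp Require Import all_boot all_order all_algebra.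
From mathcomp Require Import all_classical all_reals all_analysis.
From mathcomp Require Import measurable_realfun ring lra.
Set Implicit Arguments. Unset Strict Implicit. Unset Printing Implicit Defensive.
Import Order.TTheory GRing.Theory Num.Theory.
Import numFieldNormedType.Exports.
Local Open Scope classical_set_scope.
Local Open Scope ring_scope.

Section powR_facts.
Context {R : realType}.
Implicit Types (x y c : R).

Lemma gt0_powRD x c d : 0 < x -> x `^ (c + d) = x `^ c * x `^ d.
Proof. by move=> x0; rewrite powRD // (gt_eqF x0) implybT. Qed.

Lemma powRK x c : 0 <= x -> c != 0 -> (x `^ c) `^ c^-1 = x.
Proof. by move=> x0 c0; rewrite -powRrM mulfV // powRr1. Qed.

Lemma powRKV x c : 0 <= x -> c != 0 -> (x `^ c^-1) `^ c = x.
Proof. by move=> x0 c0; rewrite -powRrM mulVf // powRr1. Qed.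

Lemma powR_half x c : 0 <= x -> (x / 2) `^ c = x `^ c * 2 `^ (- c).
Proof. by move=> x0; rewrite powRM ?invr_ge0 // -powR_inv1 // -powRrM mulN1r. Qed.

Lemma ler_powR2r x y c : 0 <= c -> 0 <= x -> x <= y -> x `^ c <= y `^ c.
Proof. by move=> c0 x0 xy; apply: (ge0_ler_powR c0); rewrite // nnegrE (le_trans x0). Qed.

Lemma powRN_lt1 x c : 1 < x -> 0 < c -> x `^ (- c) < 1.
Proof.
move=> x1 c0; have x0 : 0 < x := lt_trans ltr01 x1.
rewrite powRN invf_lt1 ?powR_gt0 //.
have := gt0_ltr_powR c0 (ler01 : 0 <= 1) (ltW x0 : 0 <= x) x1.
by rewrite powR1.
Qed.

Lemma mul_powR_le1 x c e : 0 < c -> 0 < e -> 0 <= x -> c * x `^ e <= 1 -> x <= c `^ (- e^-1).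
Proof.
move=> c0 e0 x0 cx1.
have -> : c `^ (- e^-1) = c^-1 `^ e^-1 by rewrite -mulN1r powRrM powR_inv1 ?ltW.
rewrite -[x in x <= _](powRK x0 (lt0r_neq0 e0)).
apply: ler_powR2r; rewrite ?invr_ge0 ?powR_ge0 ?(ltW e0) //.
by rewrite -(ler_pM2l c0) mulfV ?lt0r_neq0.
Qed.

End powR_facts.

Section real_analysis.
Context {R : realType}.
Implicit Types (f g df G : R -> R) (a b c l x y : R).

Lemma is_derive_powR_comp g x dg c : is_derive x 1 g dg -> 0 < g x ->
  is_derive x 1 (fun y => g y `^ c) (c * g x `^ (c - 1) * dg).
Proof. by move=> gdg gx0; exact: is_derive1_comp (is_derive1_powR c gx0) gdg. Qed.

Lemma nonpos_is_derive_nonincr f df a b : a <= b ->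
  (forall x, a <= x <= b -> is_derive x 1 f (df x)) ->
  (forall x, a < x < b -> df x <= 0) -> f b <= f a.
Proof.
rewrite le_eqVlt => /predU1P[-> //|ab] fdf df_le0.
have fdf' x : x \in `]a, b[ -> is_derive x 1 f (df x).
  by rewrite in_itv /= => /andP[ax xb]; apply: fdf; rewrite !ltW.
have cf : {within `[a, b], continuous f}.
  by apply: derivable_within_continuous => x /[!in_itv] /fdf[].
rewrite -subr_le0; have [c /[!in_itv] /= cab ->] := MVT ab fdf' cf.
by rewrite mulr_le0_ge0 ?subr_ge0 ?(ltW ab) ?df_le0.
Qed.

Lemma cvg_at_right_witness f a b l e : f x @[x --> a^'+] --> l -> 0 < e -> a < b ->
  exists t, [/\ a < t, t < b & `|l - f t| < e].
Proof.
move=> /cvgrPdist_lt /(_ e) fl e0 ab.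
have : \forall t \near a^'+, (a < t /\ t < b) /\ `|l - f t| < e.
  near=> t; split; last by near: t; exact: fl.
  by split; near: t; [exact: nbhs_right_gt | exact: nbhs_right_lt].
by move=> /filter_ex[t [[xt tb] ft]]; exists t.
Unshelve. all: by end_near.
Qed.

Lemma diff_quotient_cvg_at_right f a l :
  h^-1 * (f (a + h) - f a) @[h --> 0^'+] --> l -> f x @[x --> a^'+] --> f a.
Proof.
move=> fl.
have fah : f (a + h) @[h --> 0^'+] --> f a.
  have : f a + h * (h^-1 * (f (a + h) - f a)) @[h --> 0^'+] --> f a + 0 * l.
    by apply: cvgD; [exact: cvg_cst | apply: cvgM => //; exact: cvg_at_right_filter].
  rewrite mul0r addr0; apply: cvg_trans; apply: near_eq_cvg; near=> h.
  by rewrite mulrA mulfV ?mul1r ?subrKC // gt_eqF //; near: h; exact: nbhs_right_gt.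
apply/cvg_at_rightP => x [xa xa_cvg].
have xa0 : (forall n, 0 < x n - a) /\ x n - a @[n --> \oo] --> 0.
  split => [n|]; first by rewrite subr_gt0.
  by rewrite -(subrr a); apply: cvgB => //; exact: cvg_cst.
have := (cvg_at_rightP _ _ _).1 fah _ xa0.
by under eq_fun do rewrite subrKC.
Unshelve. all: by end_near.
Qed.

Lemma cvg_powR {T} (F : set_system T) {FF : Filter F} (g : T -> R) l c :
  0 < c -> 0 <= l -> (\forall t \near F, 0 <= g t) ->
  g t @[t --> F] --> l -> g t `^ c @[t --> F] --> l `^ c.
Proof.
move=> c0; rewrite le_eqVlt => /predU1P[<-|l0] g_ge0 gl; last first.
  have : derivable (fun x : R => x `^ c) l 1.
    by apply: derivable_powR; rewrite in_itv /= l0.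
  move/derivable1_diffP/differentiable_continuous => pc.
  exact: (continuous_cvg _ pc gl).
rewrite powR0 ?gt_eqF //; apply/cvgrPdist_lt => e e0.
move/cvgrPdist_lt: gl => /(_ (e `^ c^-1) (powR_gt0 _ e0)).
apply: filterS2 g_ge0 => t gt0; rewrite !sub0r !normrN !ger0_norm ?powR_ge0 // => gte.
rewrite -(powRKV (ltW e0) (lt0r_neq0 c0)).
by apply: gt0_ltr_powR; rewrite ?nnegrE ?powR_ge0.
Qed.

Lemma is_derive_FTC2 f G a b : a < b -> {within `[a, b], continuous f} ->
  (forall x, a <= x <= b -> is_derive x 1 G (f x)) ->
  (\int[lebesgue_measure]_(x in `[a, b]) (f x)%:E = (G b - G a)%:E)%E.
Proof.
move=> ab cf dG; have cG : {within `[a, b], continuous G}.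
  by apply: derivable_within_continuous => x /[!in_itv] /dG[].
have [_ Ga Gb] := (continuous_within_itvP _ ab).1 cG.
rewrite (continuous_FTC2 (F := G) ab cf) ?EFinB //.
  by split => // x /[!in_itv] /andP[ax xb]; case: (dG x); rewrite ?ltW.
by move=> x /[!in_itv] /andP[ax xb]; rewrite derive1E; case: (dG x) => [|_ ->]; rewrite ?ltW.
Qed.

Lemma ge0_integral_itv_cvg_at_right f a b :
  (forall x, a < x <= b -> 0 <= f x) -> {in `]a, b], continuous f} ->
  (\int[lebesgue_measure]_(x in `[(a + n.+1%:R^-1)%R, b]) (f x)%:E)%E @[n --> \oo] -->
  (\int[lebesgue_measure]_(x in `[a, b]) (f x)%:E)%E.
Proof.
move=> f_ge0 cf; have mf : measurable_fun `]a, b] f.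
  apply: subspace_continuous_measurable_fun => //.
  by apply: continuous_in_subspaceT => x /[!inE]; exact: cf.
have a_lt n : a < a + n.+1%:R^-1 by rewrite ltrDl invr_gt0 ltr0n.
rewrite -integral_itv_obnd_cbnd; last exact/measurable_EFinP.
rewrite (itv_open_bnd_bigcup false b a); apply: ge0_nondecreasing_set_cvg_integral => //.
- move=> i j ij; apply/subsetPset/subset_itvr; rewrite bnd_simp lerD2l.
  by rewrite lef_pV2 ?posrE ?ler_nat.
- move=> i; apply/measurable_EFinP; apply: (measurable_funS (measurable_itv _) _ mf).
  by apply: subset_itvr; rewrite bnd_simp a_lt.
- by move=> i x /= /[!in_itv] /andP[ix xb]; rewrite lee_fin f_ge0 // (lt_le_trans (a_lt i) ix).
Qed.

Lemma is_derive0_cvg_at_right G a b l : a < b ->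
  (forall x, a < x <= b -> is_derive x 1 G 0) -> G x @[x --> a^'+] --> l -> G b = l.
Proof.
move=> ab dG Gl; have Gb x : a < x <= b -> G x = G b.
  move=> /andP[ax xb]; have dG' y : x <= y <= b -> is_derive y 1 G 0.
    by move=> /andP[xy yb]; apply: dG; rewrite yb (lt_le_trans ax xy).
  apply/eqP; rewrite eq_le (nonpos_is_derive_nonincr xb dG') //.
  have dGN y : x <= y <= b -> is_derive y 1 (fun z => - G z) 0.
    by move=> /dG' dGy; rewrite -oppr0; exact: is_deriveN dGy.
  by rewrite -lerN2 (nonpos_is_derive_nonincr xb dGN).
have GbG : G x @[x --> a^'+] --> G b.
  apply: cvg_near_cst; near=> x; apply: Gb; apply/andP; split; near: x.
    exact: nbhs_right_gt.
  exact: nbhs_right_le.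
exact: cvg_unique GbG Gl.
Unshelve. all: by end_near.
Qed.

Lemma ge0_FTC_at_right f G c a b l : a < b ->
  (forall x, a < x <= b -> 0 <= f x) -> {in `]a, b], continuous f} ->
  (forall x, a < x <= b -> is_derive x 1 G (c * f x)) ->
  G x @[x --> a^'+] --> l ->
  (c%:E * \int[lebesgue_measure]_(x in `[a, b]) (f x)%:E = (G b - l)%:E)%E.
Proof.
move=> ab f_ge0 cf dG Gl; have [c0|c0] := eqVneq c 0.
  rewrite c0 mul0e (is_derive0_cvg_at_right ab _ Gl) ?subrr // => x /dG.
  by rewrite c0 mul0r.
pose t n := a + n.+1%:R^-1.
have ta n : a < t n by rewrite ltrDl invr_gt0 ltr0n.
have G_cvg : ((G b - G (t n)) / c)%:E @[n --> \oo] --> ((G b - l) / c)%:E.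
  apply: cvg_EFin; first by near=> n.
  apply: cvgM; last exact: cvg_cst.
  apply: cvgB; first exact: cvg_cst.
  apply: (cvg_at_rightP _ _ _).1 Gl _ (conj ta _).
  by rewrite -[a in _ --> a]addr0; apply: cvgD; [exact: cvg_cst | exact: cvg_harmonic].
have int_G : \forall n \near \oo,
    (\int[lebesgue_measure]_(x in `[t n, b]) (f x)%:E)%E = ((G b - G (t n)) / c)%:E.
  have /cvgrPdist_lt /(_ (b - a)) := @cvg_harmonic R; rewrite subr_gt0 => /(_ ab).
  apply: filterS => n; rewrite sub0r normrN ger0_norm ?harmonic_ge0 // => hn.
  have tb : t n < b by rewrite /t -ltrBrDl.
  have cf' : {within `[t n, b], continuous f}.
    apply: continuous_in_subspaceT => x /[!inE] /= /[!in_itv] /andP[tx xb].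
    by apply: cf; rewrite in_itv /= (lt_le_trans (ta n) tx).
  have dGc x : t n <= x <= b -> is_derive x 1 (fun y => G y / c) (f x).
    move=> /andP[tx xb]; have := is_deriveM (dG x _) (is_derive_cst c^-1 x 1).
    rewrite (lt_le_trans (ta n) tx) xb => /(_ isT) dGx.
    by apply: is_derive_eq dGx _; rewrite scaler0 add0r -[_ *: _]/(c^-1 * (c * f x)) mulKf.
  by rewrite mulrBl (is_derive_FTC2 tb cf' dGc).
have int_lim : (\int[lebesgue_measure]_(x in `[t n, b]) (f x)%:E)%E @[n --> \oo] -->
    ((G b - l) / c)%:E.
  by apply: cvg_trans G_cvg; apply: near_eq_cvg; apply: filterS int_G => n ->.
have := cvg_unique _ (ge0_integral_itv_cvg_at_right f_ge0 cf) int_lim.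
by move=> ->; rewrite // -EFinM mulrC divfK.
Unshelve. all: by end_near.
Qed.
End real_analysis.

Definition plap_flux {R : realType} (a q : R) (du : R -> R) (r : R) : R :=
  r `^ a * (`|du r| `^ (q - 1) * du r).

(* In the theorem, a = N + alpha - 1, q = m - 1 and n = N + beta. *)
Section radial_solution.
Context {R : realType} (a q n p lam : R).
Hypotheses (q_gt0 : 0 < q) (q_lt_a : q < a) (a_lt_n : a < n) (q_lt_p : q < p)
  (lam_gt0 : 0 < lam).

Let a_gt0 : 0 < a := lt_trans q_gt0 q_lt_a.
Let n_gt0 : 0 < n := lt_trans a_gt0 a_lt_n.
Let p_gt0 : 0 < p := lt_trans q_gt0 q_lt_p.

Lemma plap_flux_le0E (du : R -> R) x :
  du x <= 0 -> plap_flux a q du x = - (x `^ a * `|du x| `^ q).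
Proof.
move=> du0; rewrite /plap_flux -{2}(opprK (du x)) -(ler0_norm du0).
by rewrite mulrN [_ * `|du x|]mulrC mulr_powRB1 // mulrN.
Qed.

Lemma plap_flux_ge0E (du : R -> R) x :
  0 <= du x -> plap_flux a q du x = x `^ a * du x `^ q.
Proof. by move=> du0; rewrite /plap_flux ger0_norm // [_ * du x]mulrC mulr_powRB1. Qed.

Local Notation g := ((n - a) / q).
Local Notation k := ((p - q) / q).
Local Notation e := (1 - a / q).

Definition flux_coef := lam / n * (1 - 2 `^ (- n)).
Definition decay_coef := k * flux_coef `^ q^-1 / (g + 1) * (1 - 2 `^ (- (g + 1))).
Definition decay_rate := (g + 1) / k.
Definition drop_coef := (2 `^ e - 4 `^ e) / (- e).
Definition start_flux_coef := lam / n * 2^-1 `^ p * (2 `^ n - (3 / 2) `^ n).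
Definition start_energy_coef :=
  lam * ((q + 1) / q) / (p + 1) * ((3 / 4) `^ (p + 1) - 2^-1 `^ (p + 1)).
Definition start_bound :=
  (start_flux_coef `^ q^-1 * drop_coef) `^ (- (g + 1)^-1)
  + (start_energy_coef `^ (q + 1)^-1 * drop_coef) `^ (- ((n + q - a) / (q + 1))^-1).
Definition decay_bound := (4 * start_bound) `^ decay_rate + decay_coef `^ (- k^-1).

Definition pohozaev (u du : R -> R) (y : R) :=
  - (q / (q + 1)) * y `^ a * `|du y| `^ q * (y * du y + (a - q) / q * u y)
  + lam / (p + 1) * (y `^ n * u y `^ (p + 1)).

Let g_gt0 : 0 < g. Proof. by rewrite divr_gt0 // subr_gt0. Defined.
Let k_gt0 : 0 < k. Proof. by rewrite divr_gt0 // subr_gt0. Defined.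
Let e_lt0 : e < 0. Proof. by rewrite subr_lt0 ltr_pdivlMr ?mul1r. Defined.

Lemma flux_coef_gt0 : 0 < flux_coef.
Proof. by rewrite mulr_gt0 ?divr_gt0 ?subr_gt0 ?powRN_lt1 ?ltr1n. Qed.

Lemma decay_coef_gt0 : 0 < decay_coef.
Proof.
have := g_gt0; have := k_gt0; have := flux_coef_gt0 => ? ? ?.
by rewrite !mulr_gt0 ?divr_gt0 ?invr_gt0 ?powR_gt0 ?subr_gt0 ?powRN_lt1 ?ltr1n ?addr_gt0.
Qed.

Lemma drop_coef_gt0 : 0 < drop_coef.
Proof.
have e0 := e_lt0; rewrite divr_gt0 ?oppr_gt0 // subr_gt0.
have -> : 4 = 2 * 2 :> R by rewrite -natrM.
rewrite powRM // -[ltRHS]mulr1 ltr_pM2l ?powR_gt0 //.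
by rewrite -[e]opprK powRN_lt1 ?ltr1n // oppr_gt0.
Qed.

Lemma start_flux_coef_gt0 : 0 < start_flux_coef.
Proof.
rewrite !mulr_gt0 ?divr_gt0 ?invr_gt0 ?powR_gt0 ?subr_gt0 //.
by apply: (gt0_ltr_powR n_gt0); rewrite ?nnegrE //; lra.
Qed.

Lemma start_energy_coef_gt0 : 0 < start_energy_coef.
Proof.
have p1 : 0 < p + 1 by rewrite addr_gt0.
rewrite !mulr_gt0 ?divr_gt0 ?invr_gt0 ?subr_gt0 ?addr_gt0 //.
by apply: (gt0_ltr_powR p1); rewrite ?nnegrE //; lra.
Qed.

Lemma decay_bound_gt0 : 0 < decay_bound.
Proof. by rewrite ltr_wpDl ?powR_ge0 ?powR_gt0 ?decay_coef_gt0. Qed.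

Section solution.
Variables (s0 : R) (u du : R -> R).
Hypotheses (s0_ge0 : 0 <= s0) (u_gt0 : forall x, s0 <= x -> 0 < u x)
  (u_deriv : forall x, s0 < x -> is_derive x 1 u (du x))
  (u_cvg : u x @[x --> s0^'+] --> u s0) (du_cvg : du x @[x --> s0^'+] --> du s0)
  (flux_deriv : forall x, s0 < x ->
     is_derive x 1 (plap_flux a q du) (- (lam * x `^ (n - 1) * u x `^ p)))
  (u_s0 : u s0 = 1) (du_s0 : du s0 <= 0).

Local Notation F := (plap_flux a q du).

Lemma plap_flux_decreasing x y : s0 < x -> x < y -> F y < F x.
Proof.
move=> s0x xy.
have dF z : z \in `]x, y[ -> is_derive z 1 F (- (lam * z `^ (n - 1) * u z `^ p)).
  by rewrite in_itv /= => /andP[xz _]; apply: flux_deriv; exact: lt_trans xz.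
have cF : {within `[x, y], continuous F}.
  apply: derivable_within_continuous => z /[!in_itv] /andP[xz _].
  by case: (flux_deriv (lt_le_trans s0x xz)).
rewrite -subr_lt0; have [z /[!in_itv] /andP[xz _] ->] := MVT xy dF cF.
have s0z : s0 < z := lt_trans s0x xz.
rewrite pmulr_llt0 ?subr_gt0 // oppr_lt0 !mulr_gt0 ?powR_gt0 ?u_gt0 ?(ltW s0z) //.
exact: le_lt_trans s0_ge0 s0z.
Qed.

Lemma plap_flux_le0 x : s0 < x -> F x <= 0.
Proof.
move=> s0x; rewrite leNgt; apply/negP => Fx0.
have x0 : 0 < x := le_lt_trans s0_ge0 s0x.
pose d := (F x / x `^ a) `^ q^-1.
have d0 : 0 < d by rewrite powR_gt0 // divr_gt0 // powR_gt0.
have Fx : F x = x `^ a * d `^ q.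
  by rewrite powRKV ?(lt0r_neq0 q_gt0) ?divr_ge0 ?powR_ge0 ?ltW // mulrC divfK ?gt_eqF ?powR_gt0.
have d_lt_du t : s0 < t -> t < x -> d < du t.
  move=> s0t tx; have Ftx := plap_flux_decreasing s0t tx.
  rewrite ltNge; apply/negP => dut.
  have [du0|du0] := leP (du t) 0.
    have : F t <= 0 by rewrite plap_flux_le0E // oppr_le0 mulr_ge0 ?powR_ge0.
    by move: Fx0 Ftx; lra.
  have : F t <= F x.
    rewrite plap_flux_ge0E ?(ltW du0) // Fx; apply: ler_pM; rewrite ?powR_ge0 //.
      by rewrite ler_powR2r ?(ltW a_gt0) ?(ltW tx) // (le_trans s0_ge0) ?ltW.
    by rewrite ler_powR2r ?(ltW q_gt0) ?(ltW du0).
  by move: Ftx; lra.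
have [t [s0t tx dut]] := cvg_at_right_witness du_cvg d0 s0x.
have := d_lt_du t s0t tx; move: dut du_s0; rewrite ltr_norml; lra.
Qed.

Lemma plap_flux_lt0 x : s0 < x -> F x < 0.
Proof.
move=> s0x; have s0m : s0 < (s0 + x) / 2 by move: s0x; lra.
have mx : (s0 + x) / 2 < x by move: s0x; lra.
by have := plap_flux_decreasing s0m mx; have := plap_flux_le0 s0m; lra.
Qed.

Lemma du_lt0 x : s0 < x -> du x < 0.
Proof.
move=> s0x; rewrite ltNge; apply/negP => du0.
by have := plap_flux_lt0 s0x; rewrite plap_flux_ge0E // ltNge mulr_ge0 ?powR_ge0.
Qed.

Lemma opp_plap_flux_powR x : s0 < x -> (- F x) `^ q^-1 = - du x * x `^ (a / q).
Proof.
move=> s0x; rewrite plap_flux_le0E ?ltW ?du_lt0 // opprK powRM ?powR_ge0 //.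
by rewrite -powRrM powRK ?normr_ge0 ?(lt0r_neq0 q_gt0) // ltr0_norm ?du_lt0 // mulrC.
Qed.

Lemma opp_du_eq x : s0 < x -> - du x = (- F x) `^ q^-1 * x `^ (- (a / q)).
Proof.
move=> s0x; have x0 : 0 < x := le_lt_trans s0_ge0 s0x.
by rewrite opp_plap_flux_powR // -mulrA -gt0_powRD // addrN powRr0 mulr1.
Qed.

Lemma u_nonincreasing x y : s0 < x -> x <= y -> u y <= u x.
Proof.
move=> s0x xy; apply: (nonpos_is_derive_nonincr (df := du) xy) => z /andP[xz _].
  exact/u_deriv/(lt_le_trans s0x xz).
exact/ltW/du_lt0/(lt_trans s0x xz).
Qed.

Lemma u_le1 x : s0 < x -> u x <= 1.
Proof.
move=> s0x; rewrite leNgt; apply/negP => ux1.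
have ux10 : 0 < u x - 1 by rewrite subr_gt0.
have [t [s0t tx ut]] := cvg_at_right_witness u_cvg ux10 s0x.
by have := u_nonincreasing s0t (ltW tx); move: ut; rewrite u_s0 ltr_norml; lra.
Qed.

Lemma plap_flux_upper t x : s0 < t -> t <= x ->
  F x <= - (lam / n * u x `^ p * (x `^ n - t `^ n)).
Proof.
move=> s0t tx.
pose H y := F y + lam / n * u y `^ p * (y `^ n - t `^ n).
pose dH y := lam / n * ((y `^ n - t `^ n) * (p * u y `^ (p - 1) * du y)).
have : H x <= H t.
  apply: (nonpos_is_derive_nonincr (df := dH) tx) => y /andP[ty _].
    have s0y := lt_le_trans s0t ty; have y0 := le_lt_trans s0_ge0 s0y.
    have D := is_deriveD (flux_deriv s0y) (is_deriveM (is_deriveM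
      (is_derive_cst (lam / n) y 1) (is_derive_powR_comp p (u_deriv s0y) (u_gt0 (ltW s0y))))
      (is_deriveB (is_derive1_powR n y0) (is_derive_cst (t `^ n) y 1))).
    apply: is_derive_eq D _; rewrite /GRing.scale !fctE /= /dH; field; exact: lt0r_neq0.
  have s0y := lt_trans s0t ty; have y0 := le_lt_trans s0_ge0 s0y.
  have tyn : t `^ n <= y `^ n.
    by rewrite ler_powR2r ?(ltW n_gt0) ?(ltW ty) // (le_trans s0_ge0) ?ltW.
  rewrite mulr_ge0_le0 ?divr_ge0 ?(ltW lam_gt0) ?(ltW n_gt0) //.
  by rewrite mulr_ge0_le0 ?subr_ge0 // mulr_ge0_le0 ?mulr_ge0 ?powR_ge0 ?(ltW p_gt0) ?(ltW (du_lt0 s0y)).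
by rewrite /H subrr mulr0 addr0; have := plap_flux_le0 s0t; lra.
Qed.

Lemma opp_du_lower t y : s0 < t -> 2 * t <= y ->
  flux_coef `^ q^-1 * u y `^ (p / q) * y `^ g <= - du y.
Proof.
move=> s0t ty; have t0 := le_lt_trans s0_ge0 s0t.
have ty' : t <= y by move: ty t0; lra.
have s0y := lt_le_trans s0t ty'; have y0 := lt_le_trans t0 ty'.
have Fy : flux_coef * u y `^ p * y `^ n <= - F y.
  have tn : t `^ n <= y `^ n * 2 `^ (- n).
    rewrite -(powR_half _ (ltW y0)) ler_powR2r ?(ltW n_gt0) ?(ltW t0) //.
    by rewrite ler_pdivlMr //; move: ty; lra.
  have c0 : 0 < lam / n * u y `^ p by rewrite mulr_gt0 ?divr_gt0 ?powR_gt0 ?u_gt0 ?(ltW s0y).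
  have : lam / n * u y `^ p * (y `^ n * (1 - 2 `^ (- n))) <=
         lam / n * u y `^ p * (y `^ n - t `^ n).
    by rewrite ler_pM2l // mulrBr mulr1 lerD2l lerN2.
  have := plap_flux_upper s0t ty'.
  have -> : flux_coef * u y `^ p * y `^ n = lam / n * u y `^ p * (y `^ n * (1 - 2 `^ (- n))).
    by rewrite /flux_coef; ring.
  lra.
rewrite opp_du_eq //.
have -> : y `^ g = y `^ (n / q) * y `^ (- (a / q)) by rewrite -gt0_powRD // mulrBl.
rewrite mulrA ler_wpM2r ?powR_ge0 //.
have c0 := ltW flux_coef_gt0.
have -> : flux_coef `^ q^-1 * u y `^ (p / q) * y `^ (n / q) =
          (flux_coef * u y `^ p * y `^ n) `^ q^-1.
  by rewrite (powRM _ (mulr_ge0 c0 (powR_ge0 _ _))) ?powR_ge0 // (powRM _ c0) ?powR_ge0 // -!powRrM.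
by rewrite ler_powR2r ?invr_ge0 ?(ltW q_gt0) // (mulr_ge0 (mulr_ge0 c0 (powR_ge0 _ _))) ?powR_ge0.
Qed.

Lemma u_powRN_lower r : 4 * s0 < r -> decay_coef * r `^ (g + 1) <= u r `^ (- k).
Proof.
move=> s0r; have s00 := s0_ge0; have r0 : 0 < r by move: s0r s00; lra.
have k0 := k_gt0; have g0 := g_gt0.
pose c := k * flux_coef `^ q^-1 / (g + 1).
pose W y := - (u y `^ (- k) - c * y `^ (g + 1)).
pose dW y := - k * (u y `^ (- k - 1) * - du y - flux_coef `^ q^-1 * y `^ g).
have : W r <= W (r / 2).
  apply: (nonpos_is_derive_nonincr (df := dW)) => [|y /andP[ry _]|y /andP[ry _]].
  - by move: r0; lra.
  - have s0y : s0 < y by move: s0r s00 ry; lra.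
    have y0 := le_lt_trans s00 s0y.
    have D := is_deriveN (is_deriveB
      (is_derive_powR_comp (- k) (u_deriv s0y) (u_gt0 (ltW s0y)))
      (is_deriveM (is_derive_cst c y 1) (is_derive1_powR (g + 1) y0))).
    apply: is_derive_eq D _; rewrite /GRing.scale !fctE /= /dW /c addrK.
    have nq : 0 < n - a + q by move: a_lt_n q_gt0; lra.
    by field; rewrite !lt0r_neq0.
  - have s0y : s0 < y by move: s0r s00 ry; lra.
    have uy := u_gt0 (ltW s0y).
    rewrite /dW mulNr oppr_le0 mulr_ge0 ?(ltW k0) // subr_ge0.
    have s0r4 : s0 < r / 4 by move: s0r; lra.
    have ry4 : 2 * (r / 4) <= y by move: ry; lra.
    have uk : u y `^ (- k - 1) * u y `^ (p / q) = 1.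
      rewrite -gt0_powRD // (_ : - k - 1 + p / q = 0) ?powRr0 //.
      by field; exact: lt0r_neq0.
    apply: le_trans (ler_wpM2l (powR_ge0 _ _) (opp_du_lower s0r4 ry4)).
    by rewrite [_ * u y `^ (p / q)]mulrC !mulrA uk mul1r.
have := powR_ge0 (u (r / 2)) (- k).
have -> : decay_coef * r `^ (g + 1) = c * (r `^ (g + 1) - (r / 2) `^ (g + 1)).
  by rewrite powR_half ?(ltW r0) // /decay_coef /c; ring.
by rewrite /W; lra.
Qed.

Lemma decay_far r : 4 * s0 < r -> r `^ decay_rate * u r <= decay_coef `^ (- k^-1).
Proof.
move=> s0r; have s00 := s0_ge0; have r0 : 0 < r by move: s0r s00; lra.
have ur : 0 < u r by apply: u_gt0; move: s0r s00; lra.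
apply: mul_powR_le1 decay_coef_gt0 k_gt0 (mulr_ge0 (powR_ge0 _ _) (ltW ur)) _.
rewrite powRM ?powR_ge0 ?(ltW ur) // -powRrM /decay_rate divfK ?(lt0r_neq0 k_gt0) //.
rewrite mulrA; apply: le_trans (ler_wpM2r (powR_ge0 _ _) (u_powRN_lower s0r)) _.
by rewrite -gt0_powRD // addNr powRr0.
Qed.

Lemma u_drop t r0 r1 : s0 < t -> t <= r0 -> r0 <= r1 ->
  (- F t) `^ q^-1 * (r0 `^ e - r1 `^ e) / (- e) <= u r0 - u r1.
Proof.
move=> s0t tr0 r01; have e0 := e_lt0; have s00 := s0_ge0.
pose K := (- F t) `^ q^-1.
pose Z y := u y + K / e * y `^ e.
have : Z r1 <= Z r0.
  apply: (nonpos_is_derive_nonincr (df := fun y => du y + K * y `^ (- (a / q))) r01).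
    move=> y /andP[r0y _]; have s0y := lt_le_trans s0t (le_trans tr0 r0y).
    have D := is_deriveD (u_deriv s0y)
      (is_deriveM (is_derive_cst (K / e) y 1) (is_derive1_powR e (le_lt_trans s00 s0y))).
    apply: is_derive_eq D _; rewrite /GRing.scale !fctE /= (_ : e - 1 = - (a / q)); last by ring.
    by field; rewrite lt0r_neq0 //= ltr0_neq0 // subr_lt0.
  move=> y /andP[r0y _]; have s0y := lt_le_trans s0t (le_trans tr0 (ltW r0y)).
  rewrite -[du y]opprK opp_du_eq // addrC subr_le0 ler_wpM2r ?powR_ge0 //.
  rewrite ler_powR2r ?invr_ge0 ?(ltW q_gt0) ?oppr_ge0 ?plap_flux_le0 // lerN2 ltW //.
  exact: plap_flux_decreasing (le_lt_trans tr0 r0y).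
have -> : K * (r0 `^ e - r1 `^ e) / - e = K / e * r1 `^ e - K / e * r0 `^ e.
  by field; rewrite lt0r_neq0 //= ltr0_neq0 // subr_lt0.
by rewrite /Z; lra.
Qed.

Lemma energy_lower t x : s0 < t -> t <= x ->
  lam * ((q + 1) / q) * s0 `^ (a / q + n - 1) / (p + 1) * (u t `^ (p + 1) - u x `^ (p + 1))
  <= (- F x) `^ ((q + 1) / q).
Proof.
move=> s0t tx; have s00 := s0_ge0; have p1 : 0 < p + 1 by rewrite addr_gt0.
pose C := lam * ((q + 1) / q) * s0 `^ (a / q + n - 1) / (p + 1).
pose E y := - ((- F y) `^ ((q + 1) / q) + C * u y `^ (p + 1)).
pose dE y := - (lam * ((q + 1) / q) * u y `^ p * - du y * (y `^ (a / q + n - 1) - s0 `^ (a / q + n - 1))).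
have : E x <= E t.
  apply: (nonpos_is_derive_nonincr (df := dE) tx) => y /andP[ty _].
    have s0y := lt_le_trans s0t ty; have y0 := le_lt_trans s00 s0y.
    have Fy : 0 < - F y by rewrite oppr_gt0 plap_flux_lt0.
    have D := is_deriveN (is_deriveD
      (is_derive_powR_comp ((q + 1) / q) (is_deriveN (flux_deriv s0y)) Fy)
      (is_deriveM (is_derive_cst C y 1) (is_derive_powR_comp (p + 1) (u_deriv s0y) (u_gt0 (ltW s0y))))).
    apply: is_derive_eq D _; rewrite /GRing.scale !fctE /= addrK /dE /C.
    rewrite (_ : (q + 1) / q - 1 = q^-1); last by field; exact: lt0r_neq0.
    have -> : y `^ (a / q + n - 1) = y `^ (a / q) * y `^ (n - 1) by rewrite -gt0_powRD // addrA.
    by rewrite opp_plap_flux_powR //; field; rewrite !lt0r_neq0.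
  have s0y := lt_trans s0t ty; have aq : 1 < a / q by rewrite ltr_pdivlMr ?mul1r.
  have ka0 : 0 <= a / q + n - 1 by move: aq n_gt0; lra.
  rewrite /dE oppr_le0 mulr_ge0 ?subr_ge0 ?ler_powR2r ?(ltW s0y) //.
  by rewrite !mulr_ge0 ?powR_ge0 ?(ltW lam_gt0) ?oppr_ge0 ?(ltW (du_lt0 s0y)) ?invr_ge0 ?addr_ge0 ?(ltW q_gt0).
by rewrite /E /C; have := powR_ge0 (- F t) ((q + 1) / q); lra.
Qed.

Lemma start_drop_bound : 0 < s0 -> (- F (2 * s0)) `^ q^-1 * s0 `^ e * drop_coef <= 1.
Proof.
move=> s00; have s02 : s0 < 2 * s0 by move: s00; lra.
have s04 : 2 * s0 <= 4 * s0 by move: s00; lra.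
have := u_drop s02 (lexx _) s04; have := u_le1 s02.
have := u_gt0 (ltW (lt_le_trans s02 s04)).
have -> : (2 * s0) `^ e - (4 * s0) `^ e = s0 `^ e * (2 `^ e - 4 `^ e).
  by rewrite !powRM ?(ltW s00) //; ring.
have -> : (- F (2 * s0)) `^ q^-1 * s0 `^ e * drop_coef =
          (- F (2 * s0)) `^ q^-1 * (s0 `^ e * (2 `^ e - 4 `^ e)) / - e.
  by rewrite /drop_coef; ring.
lra.
Qed.

Lemma start_flux_lower : 0 < s0 -> 2^-1 <= u (2 * s0) ->
  start_flux_coef * s0 `^ n <= - F (2 * s0).
Proof.
move=> s00 u2; have h32 : 0 <= 3 / 2 :> R by lra.
have t1 : s0 < 3 / 2 * s0 by move: s00; lra.
have t2 : 3 / 2 * s0 <= 2 * s0 by move: s00; lra.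
have up : 2^-1 `^ p <= u (2 * s0) `^ p by rewrite ler_powR2r ?(ltW p_gt0) ?invr_ge0.
have d0 : 0 <= (2 * s0) `^ n - (3 / 2 * s0) `^ n.
  by rewrite subr_ge0 ler_powR2r ?(ltW n_gt0) ?mulr_ge0 ?(ltW s00).
have c0 : 0 <= lam / n by rewrite divr_ge0 ?(ltW lam_gt0) ?(ltW n_gt0).
have := ler_wpM2r d0 (ler_wpM2l c0 up); have := plap_flux_upper t1 t2.
have -> : start_flux_coef * s0 `^ n = lam / n * 2^-1 `^ p * ((2 * s0) `^ n - (3 / 2 * s0) `^ n).
  by rewrite /start_flux_coef !powRM ?(ltW s00) //; ring.
lra.
Qed.

Lemma start_energy_lower : 0 < s0 -> u (2 * s0) < 2^-1 ->
  start_energy_coef * s0 `^ (a / q + n - 1) <= (- F (2 * s0)) `^ ((q + 1) / q).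
Proof.
move=> s00 u2; have p1 : 0 < p + 1 by rewrite addr_gt0.
have e4 : 0 < 4^-1 :> R by rewrite invr_gt0.
have s032 : s0 < 3 / 2 * s0 by move: s00; lra.
have [t [s0t t32 ut]] := cvg_at_right_witness u_cvg e4 s032.
have t2 : t <= 2 * s0 by move: t32 s00; lra.
have u34 : (3 / 4) `^ (p + 1) <= u t `^ (p + 1).
  by rewrite ler_powR2r ?(ltW p1) //; move: ut; rewrite u_s0 ltr_norml; lra.
have u12 : u (2 * s0) `^ (p + 1) <= 2^-1 `^ (p + 1).
  by rewrite ler_powR2r ?(ltW p1) ?(ltW u2) ?(ltW (u_gt0 _)) //; move: s00; lra.
pose C := lam * ((q + 1) / q) * s0 `^ (a / q + n - 1) / (p + 1).
have C0 : 0 <= C.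
  by rewrite /C !mulr_ge0 ?divr_ge0 ?invr_ge0 ?powR_ge0 ?addr_ge0 ?(ltW lam_gt0) ?(ltW q_gt0) ?(ltW p_gt0) ?ler01.
have := energy_lower s0t t2.
have : C * ((3 / 4) `^ (p + 1) - 2^-1 `^ (p + 1)) <= C * (u t `^ (p + 1) - u (2 * s0) `^ (p + 1)).
  by rewrite ler_wpM2l //; lra.
have -> : start_energy_coef * s0 `^ (a / q + n - 1) = C * ((3 / 4) `^ (p + 1) - 2^-1 `^ (p + 1)).
  by rewrite /start_energy_coef /C; field; rewrite !lt0r_neq0.
rewrite /C; lra.
Qed.

Lemma s0_le_start_bound : s0 <= start_bound.
Proof.
have [s00|s0_le0] := ltP 0 s0; last by apply: le_trans s0_le0 _; rewrite addr_ge0 ?powR_ge0.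
pose X := (- F (2 * s0)) `^ q^-1.
have bound c d D : 0 < c -> 0 < D -> d + e = D -> c * s0 `^ d <= X ->
    s0 <= (c * drop_coef) `^ (- D^-1).
  move=> c0 D0 dD cX.
  apply: mul_powR_le1 (mulr_gt0 c0 drop_coef_gt0) D0 (ltW s00) _.
  apply: le_trans (start_drop_bound s00); rewrite -dD gt0_powRD // -/X.
  have -> : c * drop_coef * (s0 `^ d * s0 `^ e) = c * s0 `^ d * (s0 `^ e * drop_coef) by ring.
  rewrite -[X * _ * _]mulrA; apply: ler_wpM2r cX.
  by rewrite mulr_ge0 ?powR_ge0 ?(ltW drop_coef_gt0).
rewrite /start_bound; have [u2|u2] := leP (2^-1) (u (2 * s0)).
  rewrite -[s0]addr0 lerD ?powR_ge0 //; apply: (bound _ (n / q)).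
  - by rewrite powR_gt0 ?start_flux_coef_gt0.
  - by rewrite addr_gt0 ?g_gt0.
  - by rewrite mulrBl addrA addrAC.
  rewrite /X (powRrM s0) -powRM ?(ltW start_flux_coef_gt0) ?powR_ge0 //.
  apply: ler_powR2r; rewrite ?invr_ge0 ?(ltW q_gt0) ?start_flux_lower //.
  exact: mulr_ge0 (ltW start_flux_coef_gt0) (powR_ge0 _ _).
rewrite -[s0]add0r lerD ?powR_ge0 //; apply: (bound _ ((a / q + n - 1) / (q + 1))).
- by rewrite powR_gt0 ?start_energy_coef_gt0.
- by apply: divr_gt0; move: a_lt_n q_gt0; lra.
- by field; rewrite !lt0r_neq0 // addr_gt0.
have Xq : X = ((- F (2 * s0)) `^ ((q + 1) / q)) `^ (q + 1)^-1.
  by rewrite -powRrM mulrAC mulfV ?mul1r // lt0r_neq0 // addr_gt0.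
rewrite Xq (powRrM s0) -powRM ?(ltW start_energy_coef_gt0) ?powR_ge0 //.
apply: ler_powR2r; rewrite ?invr_ge0 ?addr_ge0 ?(ltW q_gt0) ?start_energy_lower //.
exact: mulr_ge0 (ltW start_energy_coef_gt0) (powR_ge0 _ _).
Qed.

Lemma decay_estimate r : s0 < r -> r `^ decay_rate * u r <= decay_bound.
Proof.
move=> s0r; have := powR_ge0 (4 * start_bound) decay_rate.
have := powR_ge0 decay_coef (- k^-1); rewrite /decay_bound.
have [s0r4 ? ?|r4 ? ?] := ltP (4 * s0) r; first by have := decay_far s0r4; lra.
have r0 := le_lt_trans s0_ge0 s0r; have ur := u_gt0 (ltW s0r).
have rate0 : 0 <= decay_rate by rewrite divr_ge0 ?addr_ge0 ?(ltW g_gt0) ?(ltW k_gt0).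
have : r `^ decay_rate * u r <= r `^ decay_rate by rewrite ger_pMr ?powR_gt0 ?u_le1.
have : r `^ decay_rate <= (4 * start_bound) `^ decay_rate.
  by rewrite ler_powR2r ?(ltW r0) //; have := s0_le_start_bound; lra.
lra.
Qed.

Lemma pohozaev_flux_form y : s0 < y -> pohozaev u du y =
  q / (q + 1) * ((- F y) `^ ((q + 1) / q) * y `^ e + (a - q) / q * u y * F y)
  + lam / (p + 1) * (y `^ n * u y `^ (p + 1)).
Proof.
move=> s0y; have y0 := le_lt_trans s0_ge0 s0y; have yaq := powR_gt0 (a / q) y0.
have Fy : 0 < - F y by rewrite oppr_gt0 plap_flux_lt0.
rewrite (_ : (q + 1) / q = 1 + q^-1); last by field; exact: lt0r_neq0.
rewrite (gt0_powRD 1 q^-1 Fy) powRr1 ?(ltW Fy) // opp_plap_flux_powR //.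
rewrite (gt0_powRD 1 (- (a / q)) y0) powRr1 ?(ltW y0) // powRN.
rewrite plap_flux_le0E ?(ltW (du_lt0 s0y)) // /pohozaev.
by field; rewrite !lt0r_neq0 // addr_gt0.
Qed.

Lemma is_derive_pohozaev y : s0 < y -> is_derive y 1 (pohozaev u du)
  (lam * (n / (p + 1) - (a - q) / (q + 1)) * (y `^ (n - 1) * u y `^ (p + 1))).
Proof.
move=> s0y; have y0 := le_lt_trans s0_ge0 s0y; have yaq := powR_gt0 (a / q) y0.
have uy := u_gt0 (ltW s0y); have Fy : 0 < - F y by rewrite oppr_gt0 plap_flux_lt0.
have D := is_deriveD (is_deriveM (is_derive_cst (q / (q + 1)) y 1)
  (is_deriveD (is_deriveM (is_derive_powR_comp ((q + 1) / q) (is_deriveN (flux_deriv s0y)) Fy)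
                          (is_derive1_powR e y0))
              (is_deriveM (is_deriveM (is_derive_cst ((a - q) / q) y 1) (u_deriv s0y))
                          (flux_deriv s0y))))
  (is_deriveM (is_derive_cst (lam / (p + 1)) y 1)
              (is_deriveM (is_derive1_powR n y0) (is_derive_powR_comp (p + 1) (u_deriv s0y) uy))).
apply: near_eq_is_derive (is_derive_eq D _).
  near=> z; rewrite pohozaev_flux_form //; near: z.
  by apply: lt_nbhsr.
rewrite /GRing.scale !fctE /= addrK.
rewrite (_ : (q + 1) / q - 1 = q^-1); last by field; exact: lt0r_neq0.
rewrite opp_plap_flux_powR // (_ : e - 1 = - (a / q)); last by ring.
rewrite (_ : (q + 1) / q = 1 + q^-1); last by field; exact: lt0r_neq0.
rewrite (gt0_powRD 1 q^-1 Fy) powRr1 ?(ltW Fy) // opp_plap_flux_powR //.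
rewrite (gt0_powRD 1 (- (a / q)) y0) powRr1 ?(ltW y0) // powRN.
have -> : y `^ n = y * y `^ (n - 1).
  by rewrite -{2}(powRr1 (ltW y0)) -gt0_powRD // addrC subrK.
rewrite (gt0_powRD p 1 uy) powRr1 ?(ltW uy) //.
by field; rewrite !lt0r_neq0 // addr_gt0.
Unshelve. all: by end_near.
Qed.

Lemma pohozaev_cvg : pohozaev u du y @[y --> s0^'+] --> pohozaev u du s0.
Proof.
have id_cvg : y @[y --> s0^'+] --> s0 := cvg_at_right_filter cvg_id.
have y_ge0 : \forall y \near s0^'+, 0 <= y.
  by near=> y; apply: le_trans s0_ge0 (ltW _); near: y; exact: nbhs_right_gt.
have powR_cvg c : 0 < c -> y `^ c @[y --> s0^'+] --> s0 `^ c.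
  by move=> c0; exact: cvg_powR c0 s0_ge0 y_ge0 id_cvg.
have u_ge0 : \forall y \near s0^'+, 0 <= u y.
  by near=> y; apply/ltW/u_gt0/ltW; near: y; exact: nbhs_right_gt.
have up_cvg : u y `^ (p + 1) @[y --> s0^'+] --> u s0 `^ (p + 1).
  exact: cvg_powR (addr_gt0 p_gt0 ltr01) (ltW (u_gt0 (lexx s0))) u_ge0 u_cvg.
have du_ge0 : \forall y \near s0^'+, 0 <= `|du y| by near=> y.
have dup_cvg : `|du y| `^ q @[y --> s0^'+] --> `|du s0| `^ q.
  exact: cvg_powR q_gt0 (normr_ge0 _) du_ge0 (cvg_norm du_cvg).
exact: cvgD (cvgM (cvgM (cvgM (cvg_cst (- (q / (q + 1)))) (powR_cvg a a_gt0)) dup_cvg)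
                   (cvgD (cvgM id_cvg du_cvg) (cvgM (cvg_cst ((a - q) / q)) u_cvg)))
             (cvgM (cvg_cst (lam / (p + 1))) (cvgM (powR_cvg n n_gt0) up_cvg)).
Unshelve. all: by end_near.
Qed.

Lemma pohozaev_identity r : s0 < r ->
  ((lam * (n / (p + 1) - (a - q) / (q + 1)))%:E *
    \int[lebesgue_measure]_(y in `[s0, r]) (y `^ (n - 1) * u y `^ (p + 1))%:E)%E
  = (pohozaev u du r - pohozaev u du s0)%:E.
Proof.
move=> s0r; apply: ge0_FTC_at_right s0r _ _ _ pohozaev_cvg.
- by move=> y _; rewrite mulr_ge0 ?powR_ge0.
- move=> y /[!in_itv] /andP[s0y _]; have y0 := le_lt_trans s0_ge0 s0y.
  have := is_deriveM (is_derive1_powR (n - 1) y0)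
    (is_derive_powR_comp (p + 1) (u_deriv s0y) (u_gt0 (ltW s0y))).
  by move=> [/derivable1_diffP/differentiable_continuous].
- by move=> y /andP[s0y _]; exact: is_derive_pohozaev.
Qed.

Lemma powR_decay_estimate r : s0 < r -> r `^ n * u r `^ (p + 1) <=
  decay_bound `^ (p + 1) * r `^ (- (((q + 1) * n - (a - q) * (p + 1)) / (p - q))).
Proof.
move=> s0r; have r0 := le_lt_trans s0_ge0 s0r; have ur := u_gt0 (ltW s0r).
have p1 : 0 <= p + 1 by rewrite addr_ge0 ?(ltW p_gt0).
have := ler_powR2r p1 (mulr_ge0 (powR_ge0 _ _) (ltW ur)) (decay_estimate s0r).
rewrite powRM ?powR_ge0 ?(ltW ur) // -powRrM => bound.
have -> : r `^ n = r `^ (decay_rate * (p + 1)) * r `^ (- (((q + 1) * n - (a - q) * (p + 1)) / (p - q))).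
  rewrite -gt0_powRD //; congr (_ `^ _); rewrite /decay_rate.
  by field; rewrite !lt0r_neq0 ?subr_gt0.
by rewrite mulrAC ler_wpM2r ?powR_ge0.
Qed.

End solution.

End radial_solution.

Lemma flux_plap_flux {R : realType} (N : nat) (al m : R) (du : R -> R) :
  flux N al m du = plap_flux (N%:R + al - 1) (m - 1) du.
Proof. by apply/funext => r; rewrite /flux /plap_flux (_ : m - 2 = m - 1 - 1) //; ring. Qed.

Theorem lemma3p2 (R : realType) (N : nat) (al be m lam p : R) :
  (1 <= N)%N -> 1 < m -> 0 < N%:R + al - m -> 0 < be - al + 1 ->
  0 < lam -> m - 1 < p ->
  let rho := (N%:R + al - m) / (m - 1) in
  exists C1 C2 : R, 0 < C1 /\ 0 < C2 /\
  forall (s0 : R) (u du : R -> R), 0 <= s0 ->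
    positive_solution N al be m lam p s0 u du ->
    let U := fun r => r * du r + rho * u r in
    (forall r, s0 < r ->
       (N%:R + be != rho * p ->
         r `^ (N%:R + be) * u r `^ (p + 1) <=
         C1 * r `^ (- ((m * (N%:R + be) - (N%:R + al - m) * (p + 1)) / (p - m + 1))))
       /\
       (N%:R + be = rho * p ->
         r `^ (N%:R + be) * u r `^ (p + 1) <=
         C2 * r `^ (- (((N%:R + al - m) * (p + 1) - (m - 1) * (N%:R + be)) / (m - 1)))))
    /\
    (forall r, s0 < r ->
       ((lam * ((N%:R + be) / (p + 1) - (N%:R + al - m) / m))%:E *
         (\int[lebesgue_measure]_(s in `[s0, r]) (s `^ (N%:R + be - 1) * u s `^ (p + 1))%:E))%E
       = (- ((m - 1) / m) * r `^ (N%:R + al - 1) * `|du r| `^ (m - 1) * U r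
          + (m - 1) / m * s0 `^ (N%:R + al - 1) * `|du s0| `^ (m - 1) * U s0
          + lam / (p + 1) * (r `^ (N%:R + be) * u r `^ (p + 1) - s0 `^ (N%:R + be)))%:E).
Proof.
move=> _ m1 aq ba lam0 qp rho.
have q0 : 0 < m - 1 by rewrite subr_gt0.
have qa : m - 1 < N%:R + al - 1 by move: aq; lra.
have an : N%:R + al - 1 < N%:R + be by move: ba; lra.
have m_eq : m = m - 1 + 1 by ring.
have aq_eq : N%:R + al - m = N%:R + al - 1 - (m - 1) by ring.
pose K := decay_bound (N%:R + al - 1) (m - 1) (N%:R + be) p lam.
have K0 : 0 < K `^ (p + 1) by rewrite powR_gt0 ?decay_bound_gt0.
exists (K `^ (p + 1)), (K `^ (p + 1)); do 2!split => //.
move=> s0 u du s00 [u0 [du_u [dq [du_c [dF [_ [us0 dus0]]]]]]] U.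
rewrite flux_plap_flux in dF.
have u_cvg := diff_quotient_cvg_at_right dq.
have [_ du_cvg] := (continuous_within_itvcyP s0 du).1 du_c.
split => r s0r.
  have := powR_decay_estimate q0 qa an qp lam0 s00 u0 du_u u_cvg du_cvg dF us0 dus0 s0r.
  have qp0 : p - (m - 1) != 0 by rewrite subr_eq0 gt_eqF.
  move=> /le_trans dec; split => [_|n_eq]; apply: dec; rewrite le_eqVlt; apply/orP; left.
    by apply/eqP; congr (_ * _ `^ _); rewrite (_ : p - m + 1 = p - (m - 1)); [field | ring].
  by apply/eqP; congr (_ * _ `^ _); rewrite n_eq /rho; field; rewrite lt0r_neq0.
have := pohozaev_identity q0 qa an qp lam0 s00 u0 du_u u_cvg du_cvg dF dus0 s0r.
rewrite -m_eq -aq_eq => ->; congr EFin; rewrite /pohozaev /U /rho us0 powR1.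
by field; rewrite !lt0r_neq0 //; lra.
Qed.
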